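(* Let $F$ be a field, $P\in F[t]$ a monic irreducible polynomial of degree $d\ge1$, and $G_1,G_2,G_3\in F[t]$ polynomials not divisible by $P$. Then $$\{x_P(G_1,G_2)\}_2-\{x_P(G_1G_3,G_2)\}_2-\{x_P(G_1,G_3)\}_2+\{x_P(G_1G_2,G_3)\}_2\in B_{d-1}(F(t)).$$
   Context: For a field $K$, $K^*$ means $K^*\otimes\mathbb{Q}$, exterior powers over $\mathbb{Q}$. $B_2(K)=\mathbb{Q}[\mathbb{P}^1(K)]/R_2(K)$, with basis symbols $\{x\}_2$ ($x\in\mathbb{P}^1(K)$) modulo the span of $\{0\}_2,\{\infty\}_2$ and $\sum_{i=1}^5(-1)^i\{r(x_1,\dots,\hat x_i,\dots,x_5)\}_2$ (pairwise distinct $x_j$, $r(a,b,c,d)=\frac{(a-b)(c-d)}{(c-b)(a-d)}$); $\delta_2(\{x\}_2)=x\wedge(1-x)\in\bigwedge^2K^*$. $V_e\subset F(t)^*\otimes\mathbb{Q}$ is the span of nonzero polynomials of degree $\le e$; $B_e(F(t))=\{y\in B_2(F(t)):\delta_2(y)\in\bigwedge^2V_e\}$. For a polynomial $G$ not divisible by $P$, let $\overline G$ be its remainder modulo $P$ (degree $<d$). For $G,H$ not divisible by $P$, $x_P(G,H):=\overline G\,\overline H/\overline{GH}\in F(t)^*$. *)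

From HB Require Import structures.
From mathcomp Require Import all_boot all_order all_algebra.
Set Implicit Arguments. Unset Strict Implicit. Unset Printing Implicit Defensive.
Import Order.TTheory GRing.Theory Num.Theory.
Local Open Scope ring_scope.

(* Formal finite Q-linear combinations  sum_i q_i [x_i]  of symbols from X,
   i.e. elements of Q[X], represented by lists; two lists represent the
   same element iff they have the same coefficient function [fcoef]. *)
Definition fsum (X : Type) := seq (rat * X).

Definition fcoef (X : eqType) (s : fsum X) (x : X) : rat :=
  \sum_(p <- s) (if p.2 == x then p.1 else 0).

Definition in_span (X : eqType) (gen : fsum X -> Prop) (v : fsum X) : Prop :=
  exists L : seq (rat * fsum X),
    (forall l, l \in L -> gen l.2) /\
    forall x, fcoef v x = \sum_(l <- L) l.1 * fcoef l.2 x.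

Section Bloch.
Variable F : fieldType.

Definition Ft := {fraction {poly F}}.
Definition pfrac (p : {poly F}) : Ft := FracField.tofrac p.

(* Q-vector space  /\^2 (K^x (x) Q)  presented as Q[K^x x K^x] modulo the
   relations (a a') /\ b = a /\ b + a' /\ b, a /\ (b b') = a /\ b + a /\ b',
   a /\ a = 0 (a, a', b, b' in K^x ).  A symbol (a, b) stands for a /\ b. *)
Definition wedge_rel (r : fsum (Ft * Ft)) : Prop :=
  (exists a a' b : Ft, [/\ a != 0, a' != 0, b != 0 &
      r = [:: (1, (a * a', b)); (-1, (a, b)); (-1, (a', b))]]) \/
  (exists a b b' : Ft, [/\ a != 0, b != 0, b' != 0 &
      r = [:: (1, (a, b * b')); (-1, (a, b)); (-1, (a, b'))]]) \/
  (exists a : Ft, a != 0 /\ r = [:: (1, (a, a))]).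

Definition wedgeV_gen (e : nat) (r : fsum (Ft * Ft)) : Prop :=
  exists p q : {poly F}, [/\ p != 0, q != 0, (size p <= e.+1)%N,
      (size q <= e.+1)%N & r = [:: (1, (pfrac p, pfrac q))]].

Definition in_wedgeV (e : nat) (w : fsum (Ft * Ft)) : Prop :=
  in_span (fun r => wedge_rel r \/ wedgeV_gen e r) w.

(* P^1(K) = option K, None = infinity.
   delta_2 {x}_2 = x /\ (1 - x), and 0 for x in {0, 1, infinity}. *)
Definition delta2_sym (c : rat) (x : option Ft) : fsum (Ft * Ft) :=
  match x with
  | Some y => if (y == 0) || (y == 1) then [::] else [:: (c, (y, 1 - y))]
  | None => [::]
  end.

Definition delta2 (xi : fsum (option Ft)) : fsum (Ft * Ft) :=
  flatten [seq delta2_sym p.1 p.2 | p <- xi].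

(* B_e(F(t)) = { y in B_2(F(t)) : delta_2 y in /\^2 V_e }.  Since delta_2 is
   well defined on B_2 = Q[P^1(K)]/R_2(K), the class of xi lies in B_e iff
   delta_2 xi lies in /\^2 V_e. *)
Definition in_Be (e : nat) (xi : fsum (option Ft)) : Prop :=
  in_wedgeV e (delta2 xi).

Definition xP (P G H : {poly F}) : Ft :=
  pfrac (G %% P) * pfrac (H %% P) / pfrac ((G * H) %% P).

End Bloch.

From mathcomp Require Import all_boot all_order all_algebra.
From mathcomp Require Import ring.
Set Implicit Arguments. Unset Strict Implicit. Unset Printing Implicit Defensive.
Import GRing.Theory.
Local Open Scope ring_scope.

(* Write x = x_P(G, H) = a b / c, where a, b, c are the remainders of G, H and
   G H modulo P.  Since a b = q P + c with deg q < d, we get 1 - x = u P with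
   u = -q / c, so that delta_2 {x}_2 = x /\ u + x /\ P.  Both x and u lie in the
   subgroup of F(t)^* generated by the nonzero polynomials of degree < d, and by
   bilinearity the wedge of two elements of that subgroup lies in /\^2 V_(d-1);
   hence delta_2 {x}_2 = x /\ P modulo /\^2 V_(d-1).
   The four terms of the combination then add up to
   (x_P(G1,G2) x_P(G1G2,G3) / (x_P(G1G3,G2) x_P(G1,G3))) /\ P, and this
   quotient is 1 because both products equal a1 a2 a3 / c123. *)

Section FormalSums.
Variable X : eqType.

Definition fscale (c : rat) (s : fsum X) : fsum X := [seq (c * p.1, p.2) | p <- s].

Lemma fcoef_nil (x : X) : fcoef [::] x = 0.
Proof. by rewrite /fcoef big_nil. Qed.

Lemma fcoef_cons (c : rat) (y : X) (s : fsum X) (x : X) :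
  fcoef ((c, y) :: s) x = c * (y == x)%:R + fcoef s x.
Proof. by rewrite /fcoef big_cons /=; case: eqP; rewrite ?mulr1 ?mulr0. Qed.

Lemma fcoef_cat (s t : fsum X) (x : X) : fcoef (s ++ t) x = fcoef s x + fcoef t x.
Proof. by rewrite /fcoef big_cat. Qed.

Lemma fcoef_scale (c : rat) (s : fsum X) (x : X) : fcoef (fscale c s) x = c * fcoef s x.
Proof.
elim: s => [|[a y] s IH]; first by rewrite /= !fcoef_nil mulr0.
by rewrite /= !fcoef_cons IH mulrDr mulrA.
Qed.

Variable gen : fsum X -> Prop.

Lemma eq_in_span (v w : fsum X) :
  (forall x, fcoef v x = fcoef w x) -> in_span gen v -> in_span gen w.
Proof. by move=> vw [L [genL vL]]; exists L; split=> // x; rewrite -vw. Qed.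

Lemma in_span_gen (c : rat) (r : fsum X) : gen r -> in_span gen (fscale c r).
Proof.
move=> genr; exists [:: (c, r)]; split; first by move=> l; rewrite inE => /eqP ->.
by move=> x; rewrite big_seq1 fcoef_scale.
Qed.

Lemma in_span_cat (v w : fsum X) :
  in_span gen v -> in_span gen w -> in_span gen (v ++ w).
Proof.
move=> [L1 [gen1 v1]] [L2 [gen2 w2]]; exists (L1 ++ L2); split.
  by move=> l; rewrite mem_cat => /orP [] ?; [apply: gen1 | apply: gen2].
by move=> x; rewrite fcoef_cat big_cat v1 w2.
Qed.

Definition eq_mod_span (v w : fsum X) := in_span gen (v ++ fscale (-1) w).

Lemma eq_mod_span_cat (v1 v2 w1 w2 : fsum X) :
  eq_mod_span v1 w1 -> eq_mod_span v2 w2 -> eq_mod_span (v1 ++ v2) (w1 ++ w2).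
Proof.
move=> vw1 vw2; apply: (eq_in_span _ (in_span_cat vw1 vw2)) => x.
by rewrite !(fcoef_cat, fcoef_scale); ring.
Qed.

Lemma eq_mod_span_in (v w : fsum X) :
  eq_mod_span v w -> in_span gen w -> in_span gen v.
Proof.
move=> vw inw; apply: (eq_in_span _ (in_span_cat vw inw)) => x.
by rewrite !(fcoef_cat, fcoef_scale); ring.
Qed.

End FormalSums.

Definition wedge (F : fieldType) (c : rat) (a b : Ft F) : fsum (Ft F * Ft F) :=
  [:: (c, (a, b))].

Lemma fcoef_wedge (F : fieldType) (c : rat) (a b : Ft F) (x : Ft F * Ft F) :
  fcoef (wedge c a b) x = c * ((a, b) == x)%:R.
Proof. by rewrite fcoef_cons fcoef_nil addr0. Qed.

(* The boolean tests are abstracted before calling [ring]: left to itself, [ring]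
   would compare them by conversion, i.e. try to evaluate equality in F(t).  The
   pairs inside [wedge] all have type [Ft F * Ft F], so equal tests are found. *)
Ltac fcoef_ring :=
  apply: eq_in_span => ?; rewrite ?fcoef_cat ?fcoef_scale ?fcoef_nil ?fcoef_wedge;
  repeat match goal with |- context [nat_of_bool (@eq_op ?T ?u ?v)] =>
    move: (@eq_op T u v) => ? end;
  ring.

Section WedgeModV.
Variables (F : fieldType) (e : nat).
Implicit Types a b y z : Ft F.

Lemma wedge_mull (c : rat) a a' b : a != 0 -> a' != 0 -> b != 0 ->
  in_wedgeV e (wedge c (a * a') b ++ wedge (-c) a b ++ wedge (-c) a' b).
Proof.
move=> a0 a'0 b0.
have := @in_span_gen _ (fun r => wedge_rel r \/ wedgeV_gen e r) c
  [:: (1, (a * a', b)); (-1, (a, b)); (-1, (a', b))].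
by rewrite /fscale /= mulr1 mulrN1; apply; left; left; exists a, a', b.
Qed.

Lemma wedge_mulr (c : rat) a b b' : a != 0 -> b != 0 -> b' != 0 ->
  in_wedgeV e (wedge c a (b * b') ++ wedge (-c) a b ++ wedge (-c) a b').
Proof.
move=> a0 b0 b'0.
have := @in_span_gen _ (fun r => wedge_rel r \/ wedgeV_gen e r) c
  [:: (1, (a, b * b')); (-1, (a, b)); (-1, (a, b'))].
by rewrite /fscale /= mulr1 mulrN1; apply; left; right; left; exists a, b, b'.
Qed.

Definition wedge_inV y z := forall c : rat, in_wedgeV e (wedge c y z).

Lemma wedge_inV_pfrac (p q : {poly F}) : p != 0 -> q != 0 ->
  (size p <= e.+1)%N -> (size q <= e.+1)%N -> wedge_inV (pfrac p) (pfrac q).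
Proof.
move=> p0 q0 sp sq c.
have := @in_span_gen _ (fun r => wedge_rel r \/ wedgeV_gen e r) c
  [:: (1, (pfrac p, pfrac q))].
by rewrite /fscale /= mulr1; apply; right; exists p, q.
Qed.

Lemma delta2_sym1 (s : rat) : delta2_sym s (Some (1 : Ft F)) = [::].
Proof. by rewrite /delta2_sym oner_eq0 eqxx. Qed.

Lemma delta2_sym_wedge (s : rat) y : y != 0 -> y != 1 ->
  delta2_sym s (Some y) = wedge s y (1 - y).
Proof. by move=> y0 y1; rewrite /delta2_sym (negbTE y0) (negbTE y1). Qed.

Lemma delta2_cons (c : rat) (y : option (Ft F)) xi :
  delta2 ((c, y) :: xi) = delta2_sym c y ++ delta2 xi.
Proof. by []. Qed.

Lemma wedge_inV1l z : z != 0 -> wedge_inV 1 z.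
Proof.
move=> z0 c; have := wedge_mull (-c) (oner_neq0 _) (oner_neq0 _) z0.
by rewrite mulr1; fcoef_ring.
Qed.

Lemma wedge_inV1r y : y != 0 -> wedge_inV y 1.
Proof.
move=> y0 c; have := wedge_mulr (-c) y0 (oner_neq0 _) (oner_neq0 _).
by rewrite mulr1; fcoef_ring.
Qed.

Lemma wedge_inV_mull y1 y2 z : y1 != 0 -> y2 != 0 -> z != 0 ->
  wedge_inV y1 z -> wedge_inV y2 z -> wedge_inV (y1 * y2) z.
Proof.
move=> y10 y20 z0 w1 w2 c.
have := in_span_cat (in_span_cat (wedge_mull c y10 y20 z0) (w1 c)) (w2 c).
fcoef_ring.
Qed.

Lemma wedge_inV_mulr y z1 z2 : y != 0 -> z1 != 0 -> z2 != 0 ->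
  wedge_inV y z1 -> wedge_inV y z2 -> wedge_inV y (z1 * z2).
Proof.
move=> y0 z10 z20 w1 w2 c.
have := in_span_cat (in_span_cat (wedge_mulr c y0 z10 z20) (w1 c)) (w2 c).
fcoef_ring.
Qed.

Lemma wedge_inV_invl y z : y != 0 -> z != 0 -> wedge_inV y z -> wedge_inV y^-1 z.
Proof.
move=> y0 z0 w c.
have := in_span_cat (wedge_mull (-c) y0 (invr_neq0 y0) z0)
  (in_span_cat (w (-c)) (wedge_inV1l z0 c)).
by rewrite (mulfV y0); fcoef_ring.
Qed.

Lemma wedge_inV_invr y z : y != 0 -> z != 0 -> wedge_inV y z -> wedge_inV y z^-1.
Proof.
move=> y0 z0 w c.
have := in_span_cat (wedge_mulr (-c) y0 z0 (invr_neq0 z0))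
  (in_span_cat (w (-c)) (wedge_inV1r y0 c)).
by rewrite (mulfV z0); fcoef_ring.
Qed.

Inductive in_Vgroup : Ft F -> Prop :=
| Vgroup_pfrac (p : {poly F}) : p != 0 -> (size p <= e.+1)%N -> in_Vgroup (pfrac p)
| VgroupM y z : in_Vgroup y -> in_Vgroup z -> in_Vgroup (y * z)
| VgroupV y : in_Vgroup y -> in_Vgroup y^-1.

Lemma Vgroup_neq0 y : in_Vgroup y -> y != 0.
Proof.
elim=> [p p0 _ | y1 y2 _ y10 _ y20 | {}y _ y0].
- by rewrite /pfrac tofrac_eq0.
- exact: (mulf_neq0 y10 y20).
- exact: invr_neq0.
Qed.

Lemma wedge_inV_Vgroup y z : in_Vgroup y -> in_Vgroup z -> wedge_inV y z.
Proof.
move=> Vy Vz; elim: Vy => [p p0 sp | y1 y2 V1 w1 V2 w2 | {}y Vy w].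
- elim: Vz => [q q0 sq | z1 z2 V1 w1 V2 w2 | {}z Vz w].
  + exact: wedge_inV_pfrac.
  + by apply: wedge_inV_mulr; rewrite ?Vgroup_neq0 //; constructor.
  + by apply: wedge_inV_invr; rewrite ?Vgroup_neq0 //; constructor.
- by apply: wedge_inV_mull; rewrite ?Vgroup_neq0.
- by apply: wedge_inV_invl; rewrite ?Vgroup_neq0.
Qed.

Definition eq_modV (v w : fsum (Ft F * Ft F)) :=
  eq_mod_span (fun r => wedge_rel r \/ wedgeV_gen e r) v w.

Lemma delta2_sym1_eq_modV (s : rat) p :
  p != 0 -> eq_modV (delta2_sym s (Some 1)) (wedge s 1 p).
Proof. by move=> p0; rewrite delta2_sym1; move: (wedge_inV1l p0 (-s)); fcoef_ring. Qed.

(* x /\ (1 - x) = x /\ u + x /\ p *)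
Lemma delta2_sym_eq_modV (s : rat) x u p : x != 0 -> x != 1 -> p != 0 ->
  1 - x = u * p -> wedge_inV x u -> eq_modV (delta2_sym s (Some x)) (wedge s x p).
Proof.
move=> x0 x1 p0 xup xu.
have u0 : u != 0.
  by apply: contra_neq x1 => u0; apply/eqP; rewrite eq_sym -subr_eq0 xup u0 mul0r.
have := in_span_cat (wedge_mulr s x0 u0 p0) (xu s).
by rewrite (delta2_sym_wedge s x0 x1) xup; fcoef_ring.
Qed.

Lemma wedge_prod_eq a1 a2 b1 b2 p :
  a1 != 0 -> a2 != 0 -> b1 != 0 -> b2 != 0 -> p != 0 -> a1 * a2 = b1 * b2 ->
  in_wedgeV e (wedge 1 a1 p ++ wedge (-1) b1 p ++ wedge (-1) b2 p ++ wedge 1 a2 p).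
Proof.
move=> a1_0 a2_0 b1_0 b2_0 p0 ab.
have := in_span_cat (wedge_mull (-1) a1_0 a2_0 p0) (wedge_mull 1 b1_0 b2_0 p0).
by rewrite ab; fcoef_ring.
Qed.

End WedgeModV.

Lemma one_sub_divE (K : fieldType) (n c q p : K) :
  c != 0 -> n = q * p + c -> 1 - n / c = - q / c * p.
Proof. by move=> c0 ->; field. Qed.

Lemma frac_cocycle (K : fieldType) (a1 a2 a3 c12 c13 c123 : K) :
  c12 != 0 -> c13 != 0 -> c123 != 0 ->
  a1 * a2 / c12 * (c12 * a3 / c123) = c13 * a2 / c123 * (a1 * a3 / c13).
Proof. by move=> c12_0 c13_0 c123_0; field; rewrite c12_0 c13_0 c123_0. Qed.

Section RemaindersModP.
Variables (F : fieldType) (P : {poly F}).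
Hypothesis P_irr : irreducible_poly P.
Local Notation e := ((size P).-1).-1.
Local Notation pf := (@pfrac F).

Lemma pfrac_eq0 (p : {poly F}) : (pf p == 0) = (p == 0).
Proof. exact: tofrac_eq0. Qed.

Lemma pfracP_neq0 : pf P != 0.
Proof. by rewrite pfrac_eq0 (irredp_neq0 P_irr). Qed.

Lemma irredp_ndvdpM (G H : {poly F}) : ~~ (P %| G) -> ~~ (P %| H) -> ~~ (P %| G * H).
Proof. by move=> PG PH; rewrite Gauss_dvdpl // irreducible_poly_coprime. Qed.

Lemma size_modP (G : {poly F}) : (size (G %% P)%R <= e.+1)%N.
Proof.
have [P_gt1 _] := P_irr; have := ltn_modp G P; rewrite (irredp_neq0 P_irr).
by case: (size P) P_gt1 => [|[|n]].
Qed.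

Lemma size_divP_modM (G H : {poly F}) :
  (size ((G %% P) * (H %% P) %/ P)%R <= e.+1)%N.
Proof.
have [P_gt1 _] := P_irr.
rewrite size_divp ?(irredp_neq0 P_irr) // leq_subLR.
apply: leq_trans (size_polyMleq _ _) _.
move: (size_modP G) (size_modP H); case: (size P) P_gt1 => [|[|n]] //= _ sG sH.
exact: leq_trans (leq_pred _) (leq_add sG sH).
Qed.

Lemma modP_in_Vgroup (G : {poly F}) : ~~ (P %| G) -> in_Vgroup e (pf (G %% P)).
Proof. by move=> PG; apply: Vgroup_pfrac (size_modP G). Qed.

Lemma xP_in_Vgroup (G H : {poly F}) :
  ~~ (P %| G) -> ~~ (P %| H) -> in_Vgroup e (xP P G H).
Proof.
move=> PG PH; apply: VgroupM (VgroupV (modP_in_Vgroup (irredp_ndvdpM PG PH))).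
exact: VgroupM (modP_in_Vgroup PG) (modP_in_Vgroup PH).
Qed.

Lemma xP_neq0 (G H : {poly F}) : ~~ (P %| G) -> ~~ (P %| H) -> xP P G H != 0.
Proof. by move=> PG PH; apply: Vgroup_neq0 (xP_in_Vgroup PG PH). Qed.

Lemma one_sub_xP (G H : {poly F}) : ~~ (P %| G * H) ->
  1 - xP P G H = pf (- ((G %% P) * (H %% P) %/ P)) / pf ((G * H) %% P) * pf P.
Proof.
move=> PGH; rewrite /xP /pfrac rmorphN; apply: one_sub_divE; first by rewrite tofrac_eq0.
have mod_prod : (G %% P) * (H %% P) %% P = (G * H) %% P.
  by rewrite modp_mul mulrC modp_mul mulrC.
by rewrite -!rmorphM -rmorphD -mod_prod -divp_eq.
Qed.

Lemma delta2_xP (s : rat) (G H : {poly F}) : ~~ (P %| G) -> ~~ (P %| H) ->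
  eq_modV e (delta2_sym s (Some (xP P G H))) (wedge s (xP P G H) (pf P)).
Proof.
move=> PG PH; have PGH := irredp_ndvdpM PG PH.
have [-> | x1] := eqVneq (xP P G H) 1; first exact: delta2_sym1_eq_modV pfracP_neq0.
have q0 : (G %% P) * (H %% P) %/ P != 0.
  apply: contra_neq x1 => q0; apply/eqP; rewrite eq_sym -subr_eq0 one_sub_xP // q0.
  by rewrite oppr0 /pfrac rmorph0 !mul0r.
have Vu : in_Vgroup e (pf (- ((G %% P) * (H %% P) %/ P)) / pf ((G * H) %% P)).
  apply: VgroupM (VgroupV (modP_in_Vgroup PGH)).
  by apply: Vgroup_pfrac; rewrite ?oppr_eq0 ?size_polyN ?size_divP_modM.
exact: delta2_sym_eq_modV (xP_neq0 PG PH) x1 pfracP_neq0 (one_sub_xP PGH)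
  (wedge_inV_Vgroup (xP_in_Vgroup PG PH) Vu).
Qed.

Lemma xP_cocycle (G1 G2 G3 : {poly F}) :
  ~~ (P %| G1) -> ~~ (P %| G2) -> ~~ (P %| G3) ->
  xP P G1 G2 * xP P (G1 * G2) G3 = xP P (G1 * G3) G2 * xP P G1 G3.
Proof.
move=> PG1 PG2 PG3; have PG12 := irredp_ndvdpM PG1 PG2.
have PG13 := irredp_ndvdpM PG1 PG3; have PG123 := irredp_ndvdpM PG12 PG3.
rewrite /xP (mulrAC G1 G3 G2).
by apply: frac_cocycle; rewrite pfrac_eq0.
Qed.

End RemaindersModP.

Theorem lemma2 (F : fieldType) (P G1 G2 G3 : {poly F}) :
  P \is monic -> irreducible_poly P -> (1 <= (size P).-1)%N ->
  ~~ (P %| G1) -> ~~ (P %| G2) -> ~~ (P %| G3) ->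
  in_Be ((size P).-1).-1
    [:: (1, Some (xP P G1 G2)); (-1, Some (xP P (G1 * G3) G2));
        (-1, Some (xP P G1 G3)); (1, Some (xP P (G1 * G2) G3))].
Proof.
move=> _ P_irr _ PG1 PG2 PG3.
have PG12 := irredp_ndvdpM P_irr PG1 PG2; have PG13 := irredp_ndvdpM P_irr PG1 PG3.
rewrite /in_Be !delta2_cons [delta2 [::]]/= cats0.
apply: (eq_mod_span_in (eq_mod_span_cat (delta2_xP P_irr 1 PG1 PG2)
  (eq_mod_span_cat (delta2_xP P_irr (-1) PG13 PG2)
  (eq_mod_span_cat (delta2_xP P_irr (-1) PG1 PG3) (delta2_xP P_irr 1 PG12 PG3))))).
exact: wedge_prod_eq (xP_neq0 P_irr PG1 PG2) (xP_neq0 P_irr PG12 PG3)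
  (xP_neq0 P_irr PG13 PG2) (xP_neq0 P_irr PG1 PG3) (pfracP_neq0 P_irr)
  (xP_cocycle P_irr PG1 PG2 PG3).
Qed.
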